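(* Let $T$ be a Sarason-Toeplitz operator on $H^2(\mathbb{T})$. Then the adjoint $T^*$ is also a Sarason-Toeplitz operator.
   Context: $H^2=H^2(\mathbb{T})$ is the Hardy space, viewed as the closed subspace of $L^2(\mathbb{T})$ spanned by $\{e^{in\theta}\}_{n\ge 0}$ (equivalently, analytic functions on the unit disc with square-summable Taylor coefficients), and $S=M_z$ is the shift operator $Sf=zf$. A Sarason-Toeplitz operator is a closed, densely defined (linear) operator $T$ on $H^2$ with domain $D(T)$ such that: (1) $D(T)$ is $S$-invariant, i.e. $zf\in D(T)$ whenever $f\in D(T)$; (2) $S^*TS=T$, i.e. $S^*T(zf)=Tf$ for all $f\in D(T)$; (3) if $f\in D(T)$ and $f(0)=0$, then $S^*f\in D(T)$. *)

(* H^2(T) is modelled, via Taylor coefficients,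
   as the space l^2(N) of square-summable complex sequences f : nat -> C. *)
From Stdlib Require Import Reals.
From Coquelicot Require Import Coquelicot.
Open Scope R_scope.

Definition vec := nat -> C.

Definition l2 (f : vec) : Prop := ex_series (fun n => (Cmod (f n)) ^ 2).

Definition vzero : vec := fun _ => RtoC 0.
Definition vadd (f g : vec) : vec := fun n => Cplus (f n) (g n).
Definition vsub (f g : vec) : vec := fun n => Cminus (f n) (g n).
Definition vscal (a : C) (f : vec) : vec := fun n => Cmult a (f n).

Definition ip (f g : vec) : C :=
  (Series (fun n => Re (Cmult (f n) (Cconj (g n)))),
   Series (fun n => Im (Cmult (f n) (Cconj (g n))))).

Definition l2norm (f : vec) : R := sqrt (Series (fun n => (Cmod (f n)) ^ 2)).

(* the shift S = M_z and its adjoint S^* on Taylor coefficients *)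
Definition shift (f : vec) : vec :=
  fun n => match n with O => RtoC 0 | S m => f m end.
Definition shift_adj (f : vec) : vec := fun n => f (S n).

(* An (unbounded) operator is a domain D together with a map T, only
   meaningful on D. *)
Definition linear_op (D : vec -> Prop) (T : vec -> vec) : Prop :=
  (forall f, D f -> l2 f) /\
  D vzero /\
  (forall f g, D f -> D g -> D (vadd f g)) /\
  (forall a f, D f -> D (vscal a f)) /\
  (forall f, D f -> l2 (T f)) /\
  (forall a b f g, D f -> D g ->
     T (vadd (vscal a f) (vscal b g)) = vadd (vscal a (T f)) (vscal b (T g))).

Definition densely_defined (D : vec -> Prop) : Prop :=
  forall f, l2 f -> forall eps, 0 < eps -> exists g, D g /\ l2norm (vsub f g) < eps.

Definition closed_op (D : vec -> Prop) (T : vec -> vec) : Prop :=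
  forall (u : nat -> vec) (f g : vec),
    (forall k, D (u k)) -> l2 f -> l2 g ->
    is_lim_seq (fun k => l2norm (vsub (u k) f)) 0 ->
    is_lim_seq (fun k => l2norm (vsub (T (u k)) g)) 0 ->
    D f /\ T f = g.

Definition sarason_toeplitz (D : vec -> Prop) (T : vec -> vec) : Prop :=
  linear_op D T /\ closed_op D T /\ densely_defined D /\
  (forall f, D f -> D (shift f)) /\
  (forall f, D f -> shift_adj (T (shift f)) = T f) /\
  (forall f, D f -> f O = RtoC 0 -> D (shift_adj f)).

Definition is_adjoint (D : vec -> Prop) (T : vec -> vec)
                      (D' : vec -> Prop) (T' : vec -> vec) : Prop :=
  (forall g, D' g <-> (l2 g /\ exists h, l2 h /\
                        forall f, D f -> ip (T f) g = ip f h)) /\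
  (forall g, D' g -> l2 (T' g)) /\
  (forall g f, D' g -> D f -> ip (T f) g = ip f (T' g)).

From Stdlib Require Import Reals Psatz Classical ClassicalEpsilon FunctionalExtensionality.
From Coquelicot Require Import Coquelicot.
Open Scope R_scope.

(* The adjoint of a densely defined operator is closed, and it is densely defined when the
   operator is closed (von Neumann); the Hilbert-space facts this needs (Cauchy-Schwarz,
   completeness of l^2, the projection theorem) are proved on Taylor coefficients. The Toeplitz
   axioms pass to the adjoint because [z D(T)] has codimension one in [D(T)]: the relation
   [S^* T S = T] then determines [T^* (z g)] up to a multiple of [e0]. *)

Definition Cnorm2 (z : C) : R := fst z ^ 2 + snd z ^ 2.
Definition Cdot (a b : C) : R := Re (Cmult a (Cconj b)).

Ltac unfold_C := repeat match goal with z : C |- _ => destruct z end;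
  unfold Cnorm2, Cdot, Cminus, Cconj, Cmult, Cplus, Copp, RtoC, Re, Im in *; simpl in *.

Lemma Cmod_pow2 (z : C) : Cmod z ^ 2 = Cnorm2 z.
Proof. unfold Cmod, Cnorm2. rewrite pow2_sqrt; [reflexivity | nra]. Qed.

Lemma Cnorm2_ge0 (z : C) : 0 <= Cnorm2 z.
Proof. unfold_C; nra. Qed.

Lemma Cnorm2_add_le (a b : C) : Cnorm2 (Cplus a b) <= 2 * (Cnorm2 a + Cnorm2 b).
Proof. unfold_C. pose proof (pow2_ge_0 (r1 - r)); pose proof (pow2_ge_0 (r2 - r0)). nra. Qed.

Lemma Cnorm2_sub_le (a b : C) : Cnorm2 (Cminus a b) <= 2 * (Cnorm2 a + Cnorm2 b).
Proof. unfold_C. pose proof (pow2_ge_0 (r1 + r)); pose proof (pow2_ge_0 (r2 + r0)). nra. Qed.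

Lemma Cnorm2_mul (a b : C) : Cnorm2 (Cmult a b) = Cnorm2 a * Cnorm2 b.
Proof. unfold_C. ring. Qed.

Lemma Cnorm2_eq0 (z : C) : Cnorm2 z = 0 -> z = RtoC 0.
Proof.
  unfold_C. intros E. pose proof (pow2_ge_0 r); pose proof (pow2_ge_0 r0).
  assert (r = 0) by nra. assert (r0 = 0) by nra. subst. reflexivity.
Qed.

Lemma Cdot_bound (a b : C) : Rabs (Cdot a b) <= Cnorm2 a + Cnorm2 b.
Proof.
  apply Rabs_le. unfold_C.
  pose proof (pow2_ge_0 (r1 - r)); pose proof (pow2_ge_0 (r2 - r0)).
  pose proof (pow2_ge_0 (r1 + r)); pose proof (pow2_ge_0 (r2 + r0)). split; nra.
Qed.

Lemma vec_ext (f g : vec) : (forall n, f n = g n) -> f = g.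
Proof. apply functional_extensionality. Qed.

Lemma Series_0 : Series (fun _ => 0) = 0.
Proof.
  rewrite (Series_ext _ (fun _ => 0 * 0)) by (intros; ring).
  rewrite Series_scal_l. ring.
Qed.

Lemma ex_series_0 : ex_series (fun _ => 0).
Proof.
  exists 0. apply (filterlim_ext (fun _ => 0)); [|apply filterlim_const].
  intros n. rewrite sum_n_const. simpl. ring.
Qed.

Lemma Series_lincomb2 (a b : nat -> R) (x y : R) : ex_series a -> ex_series b ->
  Series (fun n => x * a n + y * b n) = x * Series a + y * Series b.
Proof.
  intros Ha Hb. rewrite Series_plus.
  - rewrite !Series_scal_l. reflexivity.
  - exact (ex_series_scal_l x a Ha).
  - exact (ex_series_scal_l y b Hb).
Qed.

Lemma Series_lincomb3 (a b c : nat -> R) (x y z : R) :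
  ex_series a -> ex_series b -> ex_series c ->
  Series (fun n => x * a n + y * b n + z * c n) = x * Series a + y * Series b + z * Series c.
Proof.
  intros Ha Hb Hc. rewrite Series_plus.
  - rewrite Series_lincomb2, Series_scal_l by assumption. reflexivity.
  - exact (ex_series_plus _ _ (ex_series_scal_l x a Ha) (ex_series_scal_l y b Hb)).
  - exact (ex_series_scal_l z c Hc).
Qed.

Lemma sum_n_le_Series (a : nat -> R) (N : nat) :
  (forall n, 0 <= a n) -> ex_series a -> sum_n a N <= Series a.
Proof.
  intros Ha He. rewrite (Series_incr_n a (S N)) by (auto; lia). simpl pred.
  rewrite sum_n_Reals.
  enough (0 <= Series (fun k => a (S N + k)%nat)) by lra.
  rewrite <- Series_0. apply Series_le; [intros; split; [lra | auto]|].
  apply (ex_series_incr_n a (S N)); assumption.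
Qed.

Lemma Series_ge0 (a : nat -> R) : (forall n, 0 <= a n) -> ex_series a -> 0 <= Series a.
Proof.
  intros Ha He. eapply Rle_trans; [|apply (sum_n_le_Series a 0); auto].
  rewrite sum_O. apply Ha.
Qed.

Lemma term_le_Series (a : nat -> R) (n : nat) :
  (forall n, 0 <= a n) -> ex_series a -> a n <= Series a.
Proof.
  intros Ha He. eapply Rle_trans; [|apply (sum_n_le_Series a n); auto].
  destruct n; [rewrite sum_O; lra|].
  rewrite sum_Sn. enough (0 <= sum_n a n) by (unfold plus; simpl; lra).
  rewrite sum_n_Reals. apply cond_pos_sum. exact Ha.
Qed.

Lemma Series_le_of_partial (a : nat -> R) (eps : R) :
  (forall n, 0 <= a n) -> (forall N, sum_n a N <= eps) -> ex_series a /\ Series a <= eps.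
Proof.
  intros Ha Hp.
  assert (Hex : ex_series a).
  { destruct (ex_finite_lim_seq_incr (sum_n a) eps) as [l Hl]; [|exact Hp|now exists l].
    intros n. rewrite sum_Sn. unfold plus; simpl. pose proof (Ha (S n)). lra. }
  split; [exact Hex|].
  exact (is_lim_seq_le (sum_n a) (fun _ => eps) (Series a) eps Hp
           (Series_correct a Hex) (is_lim_seq_const eps)).
Qed.

Lemma l2_Cnorm2 (f : vec) : l2 f <-> ex_series (fun n => Cnorm2 (f n)).
Proof. split; apply ex_series_ext; intros n; [|symmetry]; apply Cmod_pow2. Qed.

Lemma l2_dominated (f g h : vec) (c : R) :
  (forall n, Cnorm2 (f n) <= c * (Cnorm2 (g n) + Cnorm2 (h n))) -> l2 g -> l2 h -> l2 f.
Proof.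
  intros H Hg%l2_Cnorm2 Hh%l2_Cnorm2. apply l2_Cnorm2.
  apply (ex_series_le (fun n => Cnorm2 (f n)) (fun n => c * (Cnorm2 (g n) + Cnorm2 (h n)))).
  - intros n. change norm with Rabs. rewrite Rabs_pos_eq by apply Cnorm2_ge0. apply H.
  - exact (ex_series_scal_l c _ (ex_series_plus _ _ Hg Hh)).
Qed.

Lemma l2_add (f g : vec) : l2 f -> l2 g -> l2 (vadd f g).
Proof. apply l2_dominated with (c := 2). intros n; apply Cnorm2_add_le. Qed.

Lemma l2_sub (f g : vec) : l2 f -> l2 g -> l2 (vsub f g).
Proof. apply l2_dominated with (c := 2). intros n; apply Cnorm2_sub_le. Qed.

Lemma l2_scal (a : C) (f : vec) : l2 f -> l2 (vscal a f).
Proof.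
  intros Hf. apply (l2_dominated _ f f (Cnorm2 a)); auto.
  intros n. unfold vscal. rewrite Cnorm2_mul.
  pose proof (Cnorm2_ge0 a); pose proof (Cnorm2_ge0 (f n)). nra.
Qed.

Lemma l2_zero : l2 vzero.
Proof.
  apply l2_Cnorm2, (ex_series_ext (fun _ => 0)); [|exact ex_series_0].
  intros n. unfold vzero, Cnorm2; simpl. ring.
Qed.

Lemma l2_shift (f : vec) : l2 f -> l2 (shift f).
Proof. intros Hf%l2_Cnorm2. apply l2_Cnorm2, ex_series_incr_1. exact Hf. Qed.

Lemma l2_shift_adj (f : vec) : l2 f -> l2 (shift_adj f).
Proof. intros Hf%l2_Cnorm2. apply l2_Cnorm2. exact (proj1 (ex_series_incr_1 _) Hf). Qed.

Definition sqnorm (f : vec) : R := Series (fun n => Cnorm2 (f n)).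

Definition ipr (f g : vec) : R := Series (fun n => Cdot (f n) (g n)).

Lemma l2norm_sqnorm (f : vec) : l2norm f = sqrt (sqnorm f).
Proof. unfold l2norm, sqnorm. f_equal. apply Series_ext. intros; apply Cmod_pow2. Qed.

Lemma sqnorm_ge0 (f : vec) : l2 f -> 0 <= sqnorm f.
Proof. intros Hf%l2_Cnorm2. apply Series_ge0; [intros; apply Cnorm2_ge0 | exact Hf]. Qed.

Lemma sqnorm_le0 (f : vec) : l2 f -> sqnorm f <= 0 -> f = vzero.
Proof.
  intros Hf H. apply vec_ext. intros n. apply Cnorm2_eq0.
  pose proof (term_le_Series _ n (fun n => Cnorm2_ge0 (f n)) (proj1 (l2_Cnorm2 f) Hf)).
  pose proof (Cnorm2_ge0 (f n)). unfold sqnorm in H. lra.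
Qed.

Lemma vsub_eq0 (f g : vec) : vsub f g = vzero -> f = g.
Proof.
  intros E. apply vec_ext. intros n. pose proof (f_equal (fun h => h n) E) as En.
  unfold vsub, vzero in En. simpl in En. rewrite <- (Cplus_0_r (g n)), <- En. ring.
Qed.

Lemma sqnorm_vsub_sym (f g : vec) : sqnorm (vsub f g) = sqnorm (vsub g f).
Proof. apply Series_ext. intros n. unfold vsub. generalize (f n) (g n). intros. unfold_C. ring. Qed.

Lemma ex_series_Cdot (f g : vec) : l2 f -> l2 g -> ex_series (fun n => Cdot (f n) (g n)).
Proof.
  intros Hf%l2_Cnorm2 Hg%l2_Cnorm2.
  apply (ex_series_le (fun n => Cdot (f n) (g n)) (fun n => Cnorm2 (f n) + Cnorm2 (g n))).
  - intros n. apply Cdot_bound.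
  - exact (ex_series_plus _ _ Hf Hg).
Qed.

Lemma ipr_sym (f g : vec) : ipr f g = ipr g f.
Proof. apply Series_ext. intros n. generalize (f n) (g n). intros. unfold_C. ring. Qed.

Lemma ipr_self (f : vec) : ipr f f = sqnorm f.
Proof. apply Series_ext. intros n. generalize (f n). intros. unfold_C. ring. Qed.

Lemma ipr_0r (f : vec) : ipr f vzero = 0.
Proof.
  rewrite <- Series_0. apply Series_ext. intros n. unfold vzero.
  generalize (f n). intros. unfold_C. ring.
Qed.

Lemma ipr_scalRl (t : R) (f h : vec) : ipr (vscal (RtoC t) f) h = t * ipr f h.
Proof.
  unfold ipr. rewrite <- Series_scal_l. apply Series_ext. intros n. unfold vscal.
  generalize (f n) (h n). intros. unfold_C. ring.
Qed.

Lemma ipr_scalRr (t : R) (f h : vec) : ipr h (vscal (RtoC t) f) = t * ipr h f.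
Proof. rewrite !(ipr_sym h). apply ipr_scalRl. Qed.

Lemma ipr_scal_conj (c : C) (f h : vec) : ipr (vscal c f) h = ipr f (vscal (Cconj c) h).
Proof. apply Series_ext. intros n. unfold vscal. generalize (f n) (h n). intros. unfold_C. ring. Qed.

Lemma ipr_lincombl (x y : R) (f g h : vec) : l2 f -> l2 g -> l2 h ->
  ipr (fun n => Cplus (Cmult (RtoC x) (f n)) (Cmult (RtoC y) (g n))) h = x * ipr f h + y * ipr g h.
Proof.
  intros Hf Hg Hh. unfold ipr. rewrite <- Series_lincomb2 by (apply ex_series_Cdot; assumption).
  apply Series_ext. intros n. generalize (f n) (g n) (h n). intros. unfold_C. ring.
Qed.

Lemma ipr_addl (f g h : vec) : l2 f -> l2 g -> l2 h -> ipr (vadd f g) h = ipr f h + ipr g h.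
Proof.
  intros. rewrite <- (Rmult_1_l (ipr f h)), <- (Rmult_1_l (ipr g h)), <- ipr_lincombl by assumption.
  f_equal. apply vec_ext. intros n. unfold vadd. ring.
Qed.

Lemma ipr_subl (f g h : vec) : l2 f -> l2 g -> l2 h -> ipr (vsub f g) h = ipr f h - ipr g h.
Proof.
  intros. replace (ipr f h - ipr g h) with (1 * ipr f h + (-1) * ipr g h) by ring.
  rewrite <- ipr_lincombl by assumption.
  f_equal. apply vec_ext. intros n. unfold vsub. ring.
Qed.

Lemma ipr_addr (f g h : vec) : l2 f -> l2 g -> l2 h -> ipr h (vadd f g) = ipr h f + ipr h g.
Proof. intros. rewrite !(ipr_sym h). apply ipr_addl; assumption. Qed.

Lemma ipr_subr (f g h : vec) : l2 f -> l2 g -> l2 h -> ipr h (vsub f g) = ipr h f - ipr h g.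
Proof. intros. rewrite !(ipr_sym h). apply ipr_subl; assumption. Qed.

Lemma sqnorm_sub_scal (y g : vec) (t : R) : l2 y -> l2 g ->
  sqnorm (vsub y (vscal (RtoC t) g)) = sqnorm y - 2 * t * ipr y g + t ^ 2 * sqnorm g.
Proof.
  intros Hy Hg. assert (Htg : l2 (vscal (RtoC t) g)) by (apply l2_scal; exact Hg).
  rewrite <- !ipr_self, !ipr_subl, !ipr_subr, !ipr_scalRl, !ipr_scalRr, (ipr_sym g y)
    by auto using l2_sub.
  ring.
Qed.

Lemma quadratic_nonneg_discr (A B C : R) :
  0 <= A -> 0 <= C -> (forall t, 0 <= A - 2 * t * B + t ^ 2 * C) -> B ^ 2 <= A * C.
Proof.
  intros HA HC Q. destruct (Req_dec C 0) as [->|HC0].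
  - destruct (Req_dec B 0) as [->|HB0]; [nra|].
    specialize (Q ((A + 1) / (2 * B))).
    replace (A - 2 * ((A + 1) / (2 * B)) * B + ((A + 1) / (2 * B)) ^ 2 * 0) with (-1) in Q
      by (field; exact HB0).
    lra.
  - specialize (Q (B / C)).
    replace (A - 2 * (B / C) * B + (B / C) ^ 2 * C) with ((A * C - B ^ 2) / C) in Q by (field; exact HC0).
    assert (HCp : 0 < C) by lra.
    apply (Rmult_le_compat_r C) in Q; [|lra].
    field_simplify in Q; lra.
Qed.

Lemma ipr_Cauchy_Schwarz (f g : vec) : l2 f -> l2 g -> ipr f g ^ 2 <= sqnorm f * sqnorm g.
Proof.
  intros Hf Hg. apply quadratic_nonneg_discr; try (apply sqnorm_ge0; assumption).
  intros t. rewrite <- sqnorm_sub_scal by assumption.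
  apply sqnorm_ge0, l2_sub, l2_scal; assumption.
Qed.

Lemma sqnorm_parallelogram (x p q : vec) : l2 x -> l2 p -> l2 q ->
  sqnorm (vsub p q) = 2 * sqnorm (vsub x p) + 2 * sqnorm (vsub x q)
                      - 4 * sqnorm (vsub x (vscal (RtoC (1/2)) (vadd p q))).
Proof.
  intros Hx Hp Hq. unfold sqnorm.
  replace (2 * _ + 2 * _ - 4 * _) with
    (2 * Series (fun n => Cnorm2 (vsub x p n)) + 2 * Series (fun n => Cnorm2 (vsub x q n))
     + (-4) * Series (fun n => Cnorm2 (vsub x (vscal (RtoC (1/2)) (vadd p q)) n))) by ring.
  rewrite <- Series_lincomb3 by (apply l2_Cnorm2; auto using l2_sub, l2_scal, l2_add).
  apply Series_ext. intros n. unfold vsub, vscal, vadd.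
  generalize (x n) (p n) (q n). intros. unfold_C. field.
Qed.

(** * Completeness *)

Definition l2_cauchy (u : nat -> vec) : Prop :=
  forall eps, 0 < eps -> exists K, forall j k, (K <= j)%nat -> (K <= k)%nat ->
    sqnorm (vsub (u j) (u k)) < eps.

Lemma is_lim_seq_sum_n (F : nat -> nat -> R) (L : nat -> R) (N : nat) :
  (forall n, is_lim_seq (fun j => F j n) (L n)) ->
  is_lim_seq (fun j => sum_n (F j) N) (sum_n L N).
Proof.
  intros H. induction N as [|N IH].
  - rewrite sum_O. apply (is_lim_seq_ext (fun j => F j 0%nat)); [intros; rewrite sum_O|]; auto.
  - rewrite sum_Sn. apply (is_lim_seq_ext (fun j => sum_n (F j) N + F j (S N))).
    + intros; rewrite sum_Sn; reflexivity.
    + apply is_lim_seq_plus'; auto.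
Qed.

Section Completeness.

Variable u : nat -> vec.
Hypothesis u_l2 : forall k, l2 (u k).
Hypothesis u_cauchy : l2_cauchy u.

Lemma l2_cauchy_coord (p : C -> R) (n : nat) :
  (forall z, p z ^ 2 <= Cnorm2 z) -> (forall a b, p (Cminus a b) = p a - p b) ->
  ex_finite_lim_seq (fun k => p (u k n)).
Proof.
  intros Hp Hlin. apply ex_lim_seq_cauchy_corr. intros eps.
  destruct (u_cauchy (eps * eps)) as [K HK]; [pose proof (cond_pos eps); nra|].
  exists K. intros j k Hj Hk. specialize (HK j k Hj Hk).
  pose proof (term_le_Series _ n (fun n => Cnorm2_ge0 (vsub (u j) (u k) n))
                (proj1 (l2_Cnorm2 _) (l2_sub _ _ (u_l2 j) (u_l2 k)))) as Hn.
  change (Cnorm2 (Cminus (u j n) (u k n)) <= sqnorm (vsub (u j) (u k))) in Hn.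
  pose proof (Hp (Cminus (u j n) (u k n))) as Hpn. rewrite Hlin in Hpn.
  pose proof (cond_pos eps).
  rewrite <- (Rabs_pos_eq eps) by lra. apply Rsqr_lt_abs_0. unfold Rsqr. simpl in Hpn. lra.
Qed.

Let v : vec := fun n => (real (Lim_seq (fun k => fst (u k n))), real (Lim_seq (fun k => snd (u k n)))).

Lemma cauchy_coord_lim (k n : nat) :
  is_lim_seq (fun j => Cnorm2 (Cminus (u k n) (u j n))) (Cnorm2 (Cminus (u k n) (v n))).
Proof.
  assert (Hfst : is_lim_seq (fun j => fst (u j n)) (fst (v n))).
  { apply Lim_seq_correct', l2_cauchy_coord; [intros z; unfold_C; nra | intros a b; unfold_C; ring]. }
  assert (Hsnd : is_lim_seq (fun j => snd (u j n)) (snd (v n))).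
  { apply Lim_seq_correct', l2_cauchy_coord; [intros z; unfold_C; nra | intros a b; unfold_C; ring]. }
  assert (E : forall a b : C, Cnorm2 (Cminus a b)
             = (fst a - fst b) * (fst a - fst b) + (snd a - snd b) * (snd a - snd b))
    by (intros; unfold_C; ring).
  rewrite E. apply (is_lim_seq_ext (fun j => (fst (u k n) - fst (u j n)) * (fst (u k n) - fst (u j n))
                                            + (snd (u k n) - snd (u j n)) * (snd (u k n) - snd (u j n)))).
  { intros; rewrite E; reflexivity. }
  apply is_lim_seq_plus'; apply is_lim_seq_mult'; apply is_lim_seq_minus'; auto using is_lim_seq_const.
Qed.

Lemma cauchy_tail_bound (eps : R) : 0 < eps -> exists K, forall k, (K <= k)%nat ->
  ex_series (fun n => Cnorm2 (vsub (u k) v n)) /\ Series (fun n => Cnorm2 (vsub (u k) v n)) <= eps.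
Proof.
  intros Heps. destruct (u_cauchy eps Heps) as [K HK]. exists K. intros k Hk.
  apply Series_le_of_partial; [intros; apply Cnorm2_ge0|]. intros N.
  assert (Hlim := is_lim_seq_sum_n (fun j n => Cnorm2 (Cminus (u k n) (u j n)))
                    (fun n => Cnorm2 (vsub (u k) v n)) N (cauchy_coord_lim k)).
  refine (is_lim_seq_le_loc _ (fun _ => eps) _ eps _ Hlim (is_lim_seq_const eps)).
  exists K. intros j Hj. left. eapply Rle_lt_trans; [|apply (HK k j Hk Hj)].
  apply (sum_n_le_Series (fun n => Cnorm2 (vsub (u k) (u j) n))); [intros; apply Cnorm2_ge0|].
  apply l2_Cnorm2, l2_sub; auto.
Qed.

Lemma l2_complete : exists v, l2 v /\ is_lim_seq (fun k => sqnorm (vsub (u k) v)) 0.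
Proof.
  exists v. split.
  - destruct (cauchy_tail_bound 1 Rlt_0_1) as [K HK]. destruct (HK K (le_n K)) as [Hex _].
    apply (l2_dominated v (u K) (vsub (u K) v) 2); [|auto|apply l2_Cnorm2; exact Hex].
    intros n. unfold vsub.
    replace (v n) with (Cminus (u K n) (Cminus (u K n) (v n))) at 1 by ring.
    apply Cnorm2_sub_le.
  - apply is_lim_seq_spec. intros eps.
    destruct (cauchy_tail_bound (eps / 2)) as [K HK]; [pose proof (cond_pos eps); lra|].
    exists K. intros k Hk. destruct (HK k Hk) as [Hex Hle].
    pose proof (Series_ge0 _ (fun n => Cnorm2_ge0 (vsub (u k) v n)) Hex).
    pose proof (cond_pos eps). unfold sqnorm. rewrite Rminus_0_r, Rabs_pos_eq; lra.
Qed.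

End Completeness.

(** * The projection theorem in l^2 x l^2 *)

Definition pvec : Type := (vec * vec)%type.
Definition l2p (p : pvec) : Prop := l2 (fst p) /\ l2 (snd p).
Definition psqnorm (p : pvec) : R := sqnorm (fst p) + sqnorm (snd p).
Definition pipr (p q : pvec) : R := ipr (fst p) (fst q) + ipr (snd p) (snd q).
Definition padd (p q : pvec) : pvec := (vadd (fst p) (fst q), vadd (snd p) (snd q)).
Definition psub (p q : pvec) : pvec := (vsub (fst p) (fst q), vsub (snd p) (snd q)).
Definition pscal (t : R) (p : pvec) : pvec := (vscal (RtoC t) (fst p), vscal (RtoC t) (snd p)).
Definition pzero : pvec := (vzero, vzero).

Lemma l2p_sub (p q : pvec) : l2p p -> l2p q -> l2p (psub p q).
Proof. intros [] []; split; apply l2_sub; assumption. Qed.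

Lemma l2p_scal (t : R) (p : pvec) : l2p p -> l2p (pscal t p).
Proof. intros []; split; apply l2_scal; assumption. Qed.

Lemma psqnorm_ge0 (p : pvec) : l2p p -> 0 <= psqnorm p.
Proof. intros [Hf Hs]. pose proof (sqnorm_ge0 _ Hf); pose proof (sqnorm_ge0 _ Hs). unfold psqnorm; lra. Qed.

Lemma psqnorm_sub_scal (y g : pvec) (t : R) : l2p y -> l2p g ->
  psqnorm (psub y (pscal t g)) = psqnorm y - 2 * t * pipr y g + t ^ 2 * psqnorm g.
Proof. intros [] []. unfold psqnorm, pipr; simpl. rewrite !sqnorm_sub_scal by assumption. ring. Qed.

Lemma pipr_Cauchy_Schwarz (y g : pvec) : l2p y -> l2p g -> pipr y g ^ 2 <= psqnorm y * psqnorm g.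
Proof.
  intros Hy Hg. apply quadratic_nonneg_discr; try (apply psqnorm_ge0; assumption).
  intros t. rewrite <- psqnorm_sub_scal by assumption.
  apply psqnorm_ge0, l2p_sub, l2p_scal; assumption.
Qed.

Lemma psqnorm_parallelogram (x p q : pvec) : l2p x -> l2p p -> l2p q ->
  psqnorm (psub p q) = 2 * psqnorm (psub x p) + 2 * psqnorm (psub x q)
                       - 4 * psqnorm (psub x (pscal (1/2) (padd p q))).
Proof.
  intros [] [] []. unfold psqnorm; simpl.
  rewrite (sqnorm_parallelogram (fst x) (fst p) (fst q)),
    (sqnorm_parallelogram (snd x) (snd p) (snd q)) by assumption.
  ring.
Qed.

Lemma pipr_subl (p q g : pvec) : l2p p -> l2p q -> l2p g ->
  pipr (psub p q) g = pipr p g - pipr q g.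
Proof. intros [] [] []. unfold pipr; simpl. rewrite !ipr_subl by assumption. ring. Qed.

Lemma psub_padd_scal (x s g : pvec) (t : R) :
  psub x (padd s (pscal t g)) = psub (psub x s) (pscal t g).
Proof. unfold psub, padd, pscal; simpl. f_equal; apply vec_ext; intros n; unfold vsub, vadd, vscal; ring. Qed.

Lemma l2p_complete (s : nat -> pvec) : (forall k, l2p (s k)) ->
  (forall eps, 0 < eps -> exists K, forall j k, (K <= j)%nat -> (K <= k)%nat ->
     psqnorm (psub (s j) (s k)) < eps) ->
  exists m, l2p m /\ is_lim_seq (fun k => psqnorm (psub (s k) m)) 0.
Proof.
  intros Hs Hc.
  assert (Hcomp : forall pr : pvec -> vec, (pr = fst \/ pr = snd) -> l2_cauchy (fun k => pr (s k))).
  { intros pr Hpr eps Heps. destruct (Hc eps Heps) as [K HK]. exists K. intros j k Hj Hk.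
    specialize (HK j k Hj Hk). unfold psqnorm, psub in HK; simpl in HK.
    pose proof (sqnorm_ge0 _ (l2_sub _ _ (proj1 (Hs j)) (proj1 (Hs k)))).
    pose proof (sqnorm_ge0 _ (l2_sub _ _ (proj2 (Hs j)) (proj2 (Hs k)))).
    destruct Hpr as [-> | ->]; lra. }
  destruct (l2_complete (fun k => fst (s k))) as [m1 [Hm1 L1]]; [intros; apply Hs | auto|].
  destruct (l2_complete (fun k => snd (s k))) as [m2 [Hm2 L2]]; [intros; apply Hs | auto|].
  exists (m1, m2). split; [split; assumption|].
  replace (Finite 0) with (Rbar_plus 0 0) by (simpl; f_equal; ring).
  apply is_lim_seq_plus'; assumption.
Qed.

Definition real_subspace (M : pvec -> Prop) : Prop :=
  (forall p, M p -> l2p p) /\ M pzero /\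
  (forall p q, M p -> M q -> M (padd p q)) /\ (forall t p, M p -> M (pscal t p)).

Lemma inv_INR_S_small (eps : R) : 0 < eps -> exists K, forall j, (K <= j)%nat -> / INR (S j) < eps.
Proof.
  intros Heps. destruct (archimed_cor1 eps Heps) as [K [HK HK0]]. exists K. intros j Hj.
  eapply Rle_lt_trans; [|exact HK]. apply Rinv_le_contravar; [apply lt_0_INR; exact HK0|].
  apply le_INR. lia.
Qed.

Lemma is_lim_seq_inv_INR_S : is_lim_seq (fun k => / INR (S k)) 0.
Proof.
  apply is_lim_seq_spec. intros eps. destruct (inv_INR_S_small eps (cond_pos eps)) as [K HK].
  exists K. intros j Hj. rewrite Rminus_0_r, Rabs_pos_eq; [apply HK; exact Hj|].
  left. apply Rinv_0_lt_compat, lt_0_INR. lia.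
Qed.

Lemma is_lim_seq_0_of_sq_le (a b : nat -> R) :
  (forall k, a k ^ 2 <= b k) -> is_lim_seq b 0 -> is_lim_seq a 0.
Proof.
  intros Hab Hb. apply is_lim_seq_spec in Hb. apply is_lim_seq_spec. intros eps.
  destruct (Hb (mkposreal (eps * eps) (Rmult_lt_0_compat _ _ (cond_pos eps) (cond_pos eps))))
    as [K HK].
  exists K. intros k Hk. specialize (HK k Hk). specialize (Hab k). simpl in HK.
  rewrite Rminus_0_r in *. pose proof (cond_pos eps).
  rewrite <- (Rabs_pos_eq eps) by lra. apply Rsqr_lt_abs_0. unfold Rsqr.
  apply Rabs_def2 in HK. simpl in Hab. lra.
Qed.

Lemma eq0_of_is_lim_seq_const (X : R) (a : nat -> R) :
  (forall k, X = a k) -> is_lim_seq a 0 -> X = 0.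
Proof.
  intros Ha Hlim. apply (is_lim_seq_ext _ (fun _ => X)) in Hlim; [|intros; symmetry; apply Ha].
  apply is_lim_seq_unique in Hlim. rewrite Lim_seq_const in Hlim. injection Hlim. auto.
Qed.

Section Projection.

Variable M : pvec -> Prop.
Variable x : pvec.
Hypothesis M_subspace : real_subspace M.
Hypothesis x_l2 : l2p x.

Let M_l2 : forall p, M p -> l2p p := proj1 M_subspace.
Let M_zero : M pzero := proj1 (proj2 M_subspace).
Let M_add : forall p q, M p -> M q -> M (padd p q) := proj1 (proj2 (proj2 M_subspace)).
Let M_scal : forall t p, M p -> M (pscal t p) := proj2 (proj2 (proj2 M_subspace)).

Lemma distance_inf : exists d, (forall g, M g -> d <= psqnorm (psub x g)) /\
  (forall eps, 0 < eps -> exists g, M g /\ psqnorm (psub x g) < d + eps).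
Proof.
  set (E := fun r => exists g, M g /\ r = - psqnorm (psub x g)).
  destruct (completeness E) as [L [HL1 HL2]].
  - exists 0. intros r [g [Hg ->]]. pose proof (psqnorm_ge0 _ (l2p_sub _ _ x_l2 (M_l2 g Hg))). lra.
  - exists (- psqnorm (psub x pzero)), pzero. split; [exact M_zero | reflexivity].
  - exists (- L). split.
    + intros g Hg. enough (- psqnorm (psub x g) <= L) by lra. apply HL1. exists g; auto.
    + intros eps Heps. apply NNPP. intros Hno.
      enough (L <= L - eps) by lra. apply HL2. intros r [g [Hg ->]].
      apply Rnot_lt_le. intros Hlt. apply Hno. exists g. split; [exact Hg | lra].
Qed.

(* Minimality of [d] makes the quadratic [t |-> |x - s - t g|^2] stay above [d]; its discriminant
   is then controlled by the excess [e]. *)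
Lemma near_minimizer_orth (d e : R) (s g : pvec) :
  (forall g, M g -> d <= psqnorm (psub x g)) -> M s -> psqnorm (psub x s) < d + e -> M g ->
  pipr (psub x s) g ^ 2 <= e * psqnorm g.
Proof.
  intros Hd Hs Hse Hg.
  assert (He : 0 < e) by (pose proof (Hd s Hs); lra).
  apply quadratic_nonneg_discr; [lra | apply psqnorm_ge0, M_l2, Hg|].
  intros t. pose proof (Hd _ (M_add _ _ Hs (M_scal t g Hg))) as Ht.
  rewrite psub_padd_scal, psqnorm_sub_scal in Ht by auto using l2p_sub.
  lra.
Qed.

Theorem projection : exists (s : nat -> pvec) m,
  (forall k, M (s k)) /\ l2p m /\ is_lim_seq (fun k => psqnorm (psub (s k) m)) 0 /\
  (forall g, M g -> pipr (psub x m) g = 0).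
Proof.
  destruct distance_inf as [d [Hd Happrox]].
  destruct (choice (fun k s => M s /\ psqnorm (psub x s) < d + / INR (S k))) as [s Hs].
  { intros k. apply Happrox, Rinv_0_lt_compat, lt_0_INR. lia. }
  assert (HsM : forall k, M (s k)) by (intros k; apply Hs).
  assert (Hsl : forall k, l2p (s k)) by (intros k; apply M_l2, HsM).
  destruct (l2p_complete s Hsl) as [m [Hm Hlim]].
  { intros eps Heps. destruct (inv_INR_S_small (eps / 4)) as [K HK]; [lra|].
    exists K. intros j k Hj Hk. rewrite (psqnorm_parallelogram x) by auto.
    pose proof (Hd _ (M_scal (1/2) _ (M_add _ _ (HsM j) (HsM k)))).
    pose proof (proj2 (Hs j)). pose proof (proj2 (Hs k)).
    pose proof (HK j Hj). pose proof (HK k Hk). lra. }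
  exists s, m. split; [exact HsM|]. split; [exact Hm|]. split; [exact Hlim|].
  intros g Hg. pose proof (M_l2 g Hg) as Hgl.
  apply (eq0_of_is_lim_seq_const _ (fun k => pipr (psub x (s k)) g + pipr (psub (s k) m) g)).
  { intros k. rewrite !pipr_subl by auto using l2p_sub. ring. }
  replace (Finite 0) with (Rbar_plus 0 0) by (simpl; f_equal; ring).
  apply is_lim_seq_plus'.
  - apply (is_lim_seq_0_of_sq_le _ (fun k => / INR (S k) * psqnorm g)).
    + intros k. apply (near_minimizer_orth d); auto; apply Hs.
    + replace (Finite 0) with (Rbar_mult 0 (psqnorm g)) by (simpl; f_equal; ring).
      apply is_lim_seq_scal_r, is_lim_seq_inv_INR_S.
  - apply (is_lim_seq_0_of_sq_le _ (fun k => psqnorm (psub (s k) m) * psqnorm g)).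
    + intros k. apply pipr_Cauchy_Schwarz; auto using l2p_sub.
    + replace (Finite 0) with (Rbar_mult 0 (psqnorm g)) by (simpl; f_equal; ring).
      apply is_lim_seq_scal_r, Hlim.
Qed.

End Projection.

(** * Operators and their adjoints *)

Section Operator.

Variables (D : vec -> Prop) (T : vec -> vec).
Hypothesis T_linear : linear_op D T.

Lemma dom_l2 (f : vec) : D f -> l2 f.
Proof. apply T_linear. Qed.

Lemma op_l2 (f : vec) : D f -> l2 (T f).
Proof. apply T_linear. Qed.

Lemma dom_zero : D vzero.
Proof. apply T_linear. Qed.

Lemma dom_add (f g : vec) : D f -> D g -> D (vadd f g).
Proof. apply T_linear. Qed.

Lemma dom_scal (a : C) (f : vec) : D f -> D (vscal a f).
Proof. apply T_linear. Qed.

Lemma op_lincomb (a b : C) (f g : vec) : D f -> D g ->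
  T (vadd (vscal a f) (vscal b g)) = vadd (vscal a (T f)) (vscal b (T g)).
Proof. apply T_linear. Qed.

Lemma dom_sub (f g : vec) : D f -> D g -> D (vsub f g).
Proof.
  intros Hf Hg. replace (vsub f g) with (vadd f (vscal (RtoC (-1)) g)).
  - apply dom_add, dom_scal; assumption.
  - apply vec_ext. intros n. unfold vadd, vscal, vsub. ring.
Qed.

Lemma op_scal (a : C) (f : vec) : D f -> T (vscal a f) = vscal a (T f).
Proof.
  intros Hf. pose proof (op_lincomb a (RtoC 0) f f Hf Hf) as E.
  replace (vadd (vscal a f) (vscal (RtoC 0) f)) with (vscal a f) in E
    by (apply vec_ext; intros n; unfold vadd, vscal; ring).
  rewrite E. apply vec_ext. intros n. unfold vadd, vscal. ring.
Qed.

Lemma op_add (f g : vec) : D f -> D g -> T (vadd f g) = vadd (T f) (T g).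
Proof.
  intros Hf Hg. pose proof (op_lincomb (RtoC 1) (RtoC 1) f g Hf Hg) as E.
  replace (vadd (vscal (RtoC 1) f) (vscal (RtoC 1) g)) with (vadd f g) in E
    by (apply vec_ext; intros n; unfold vadd, vscal; ring).
  rewrite E. apply vec_ext. intros n. unfold vadd, vscal. ring.
Qed.

Lemma op_sub (f g : vec) : D f -> D g -> T (vsub f g) = vsub (T f) (T g).
Proof.
  intros Hf Hg. pose proof (op_lincomb (RtoC 1) (RtoC (-1)) f g Hf Hg) as E.
  replace (vadd (vscal (RtoC 1) f) (vscal (RtoC (-1)) g)) with (vsub f g) in E
    by (apply vec_ext; intros n; unfold vadd, vscal, vsub; ring).
  rewrite E. apply vec_ext. intros n. unfold vadd, vscal, vsub. ring.
Qed.

Lemma op_zero : T vzero = vzero.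
Proof.
  replace vzero with (vscal (RtoC 0) vzero) at 1 by (apply vec_ext; intros n; unfold vscal, vzero; ring).
  rewrite op_scal by exact dom_zero. apply vec_ext. intros n. unfold vscal, vzero. ring.
Qed.

End Operator.

Lemma ip_re_im (u v : vec) : ip u v = (ipr u v, ipr u (vscal Ci v)).
Proof.
  unfold ip. f_equal. apply Series_ext. intros n. unfold vscal.
  generalize (u n) (v n). intros. unfold_C. ring.
Qed.

Lemma dense_orth_eq0 (D : vec -> Prop) (h : vec) : (forall f, D f -> l2 f) -> densely_defined D ->
  l2 h -> (forall f, D f -> ipr f h = 0) -> h = vzero.
Proof.
  intros Dl Dd Hh Horth. apply sqnorm_le0; [exact Hh|].
  pose proof (sqnorm_ge0 h Hh). apply Rnot_lt_le. intros Hpos.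
  destruct (Dd h Hh (sqrt (sqnorm h / 2))) as [f [Hf Hn]]; [apply sqrt_lt_R0; lra|].
  pose proof (Dl f Hf) as Hfl.
  assert (Hhf : sqnorm (vsub h f) < sqnorm h / 2).
  { rewrite l2norm_sqnorm in Hn. apply sqrt_lt_0_alt in Hn. exact Hn. }
  (* [h] is orthogonal to [f], so [|h|^2 = <h - f, h> <= |h - f| |h|], forcing [|h|^2 <= |h|^2 / 2]. *)
  assert (E : sqnorm h = ipr (vsub h f) h).
  { rewrite ipr_subl, ipr_self, Horth by assumption. ring. }
  pose proof (ipr_Cauchy_Schwarz (vsub h f) h (l2_sub _ _ Hh Hfl) Hh) as CS.
  rewrite <- E in CS. pose proof (sqnorm_ge0 _ (l2_sub _ _ Hh Hfl)). nra.
Qed.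

Lemma is_lim_seq_sqrt_0 (a : nat -> R) : (forall k, 0 <= a k) ->
  is_lim_seq (fun k => sqrt (a k)) 0 <-> is_lim_seq a 0.
Proof.
  intros Ha. split; intros H.
  - apply (is_lim_seq_ext (fun k => sqrt (a k) * sqrt (a k))); [intros; apply sqrt_sqrt, Ha|].
    replace (Finite 0) with (Rbar_mult 0 0) by (simpl; f_equal; ring).
    apply is_lim_seq_mult'; assumption.
  - apply (is_lim_seq_0_of_sq_le _ a); [|exact H].
    intros k. rewrite pow2_sqrt by apply Ha. lra.
Qed.

Lemma l2norm_lim_sqnorm (w : nat -> vec) (f : vec) : (forall k, l2 (w k)) -> l2 f ->
  is_lim_seq (fun k => l2norm (vsub (w k) f)) 0 <-> is_lim_seq (fun k => sqnorm (vsub (w k) f)) 0.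
Proof.
  intros Hw Hf. rewrite <- (is_lim_seq_sqrt_0 (fun k => sqnorm (vsub (w k) f)))
    by (intros; apply sqnorm_ge0, l2_sub; auto).
  split; apply is_lim_seq_ext; intros; rewrite l2norm_sqnorm; reflexivity.
Qed.

Section Adjoint.

Variables (D : vec -> Prop) (T : vec -> vec) (D' : vec -> Prop) (T' : vec -> vec).
Hypothesis T_linear : linear_op D T.
Hypothesis D_dense : densely_defined D.
Hypothesis T_adjoint : is_adjoint D T D' T'.

Let D_l2 := dom_l2 D T T_linear.
Let T_l2 := op_l2 D T T_linear.
Let D_scal := dom_scal D T T_linear.

Lemma adjoint_dom_l2 (g : vec) : D' g -> l2 g.
Proof. intros Hg. apply (proj1 T_adjoint) in Hg. apply Hg. Qed.

Lemma adjoint_op_l2 (g : vec) : D' g -> l2 (T' g).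
Proof. apply T_adjoint. Qed.

Lemma adjoint_ipr (f g : vec) : D f -> D' g -> ipr (T f) g = ipr f (T' g).
Proof.
  intros Hf Hg. pose proof (proj2 (proj2 T_adjoint) g f Hg Hf) as E.
  rewrite !ip_re_im in E. injection E. auto.
Qed.

(* The real part of the adjoint relation suffices, because [D] is a complex subspace:
   the imaginary part is the real part tested against [vscal (Cconj Ci) f]. *)
Lemma adjoint_dom_intro (g h : vec) : l2 g -> l2 h ->
  (forall f, D f -> ipr (T f) g = ipr f h) -> D' g.
Proof.
  intros Hg Hh H. apply (proj1 T_adjoint). split; [exact Hg|]. exists h. split; [exact Hh|].
  intros f Hf. rewrite !ip_re_im. f_equal; [auto|].
  rewrite (ipr_sym _ (vscal Ci g)), (ipr_sym f), !ipr_scal_conj, !(ipr_sym _ (vscal _ _)).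
  rewrite <- (op_scal D T T_linear) by assumption.
  apply H, D_scal; assumption.
Qed.

Lemma adjoint_op_eq (g h : vec) : D' g -> l2 h ->
  (forall f, D f -> ipr (T f) g = ipr f h) -> T' g = h.
Proof.
  intros Hg Hh H. apply vsub_eq0, (dense_orth_eq0 D); auto using D_l2.
  - apply l2_sub; [apply adjoint_op_l2, Hg | exact Hh].
  - intros f Hf. rewrite ipr_subr, <- H, adjoint_ipr by auto using D_l2, adjoint_op_l2. ring.
Qed.

Lemma adjoint_linear : linear_op D' T'.
Proof.
  assert (Hadd : forall g1 g2, D' g1 -> D' g2 ->
            forall f, D f -> ipr (T f) (vadd g1 g2) = ipr f (vadd (T' g1) (T' g2))).
  { intros g1 g2 H1 H2 f Hf.
    rewrite !ipr_addr, !adjoint_ipr by auto using D_l2, T_l2, adjoint_dom_l2, adjoint_op_l2.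
    reflexivity. }
  assert (Hscal : forall a g, D' g -> forall f, D f -> ipr (T f) (vscal a g) = ipr f (vscal a (T' g))).
  { intros a g Hg f Hf.
    rewrite <- (Cconj_conj a), <- !ipr_scal_conj, <- (op_scal D T T_linear), adjoint_ipr by auto using D_scal.
    reflexivity. }
  assert (D'add : forall g1 g2, D' g1 -> D' g2 -> D' (vadd g1 g2)).
  { intros g1 g2 H1 H2. apply (adjoint_dom_intro _ (vadd (T' g1) (T' g2)));
      auto using l2_add, adjoint_dom_l2, adjoint_op_l2. }
  assert (D'scal : forall a g, D' g -> D' (vscal a g)).
  { intros a g Hg. apply (adjoint_dom_intro _ (vscal a (T' g)));
      auto using l2_scal, adjoint_dom_l2, adjoint_op_l2. }
  split; [exact adjoint_dom_l2|]. split.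
  { apply (adjoint_dom_intro _ vzero); auto using l2_zero. intros f Hf. rewrite !ipr_0r. reflexivity. }
  split; [exact D'add|]. split; [exact D'scal|]. split; [exact adjoint_op_l2|].
  intros a b g1 g2 H1 H2.
  rewrite (adjoint_op_eq _ (vadd (T' (vscal a g1)) (T' (vscal b g2)))),
          (adjoint_op_eq (vscal a g1) (vscal a (T' g1))), (adjoint_op_eq (vscal b g2) (vscal b (T' g2)));
    auto using l2_add, l2_scal, adjoint_op_l2.
Qed.

Lemma adjoint_closed : closed_op D' T'.
Proof.
  intros u f g Hu Hf Hg L1 L2.
  pose proof (fun k => adjoint_dom_l2 _ (Hu k)) as Hul.
  pose proof (fun k => adjoint_op_l2 _ (Hu k)) as HTul.
  apply l2norm_lim_sqnorm in L1, L2; auto.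
  assert (Hrel : forall p, D p -> ipr (T p) f = ipr p g).
  { intros p Hp. apply Rminus_diag_uniq.
    apply (eq0_of_is_lim_seq_const _
             (fun k => ipr (T p) (vsub f (u k)) - ipr p (vsub g (T' (u k))))).
    { intros k. rewrite !ipr_subr, (adjoint_ipr p (u k)) by auto using D_l2, T_l2. ring. }
    replace (Finite 0) with (Rbar_minus 0 0) by (simpl; f_equal; ring).
    apply is_lim_seq_minus'.
    - apply (is_lim_seq_0_of_sq_le _ (fun k => sqnorm (T p) * sqnorm (vsub (u k) f))).
      + intros k. rewrite (sqnorm_vsub_sym (u k)). apply ipr_Cauchy_Schwarz; auto using T_l2, l2_sub.
      + replace (Finite 0) with (Rbar_mult (sqnorm (T p)) 0) by (simpl; f_equal; ring).
        apply is_lim_seq_scal_l, L1.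
    - apply (is_lim_seq_0_of_sq_le _ (fun k => sqnorm p * sqnorm (vsub (T' (u k)) g))).
      + intros k. rewrite (sqnorm_vsub_sym (T' (u k))). apply ipr_Cauchy_Schwarz; auto using D_l2, l2_sub.
      + replace (Finite 0) with (Rbar_mult (sqnorm p) 0) by (simpl; f_equal; ring).
        apply is_lim_seq_scal_l, L2. }
  assert (Hf' : D' f) by (apply (adjoint_dom_intro f g); assumption).
  split; [exact Hf'|]. apply adjoint_op_eq; assumption.
Qed.

Hypothesis T_closed : closed_op D T.

Let graph (p : pvec) : Prop := exists f, D f /\ p = (T f, f).

Lemma graph_subspace : real_subspace graph.
Proof.
  split; [|split; [|split]].
  - intros p [f [Hf ->]]. split; [apply T_l2 | apply D_l2]; exact Hf.
  - exists vzero. rewrite (op_zero D T T_linear). split; [exact (dom_zero D T T_linear) | reflexivity].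
  - intros p q [f1 [H1 ->]] [f2 [H2 ->]]. exists (vadd f1 f2).
    rewrite (op_add D T T_linear) by assumption.
    split; [apply (dom_add D T T_linear); assumption | reflexivity].
  - intros t p [f [Hf ->]]. exists (vscal (RtoC t) f).
    rewrite (op_scal D T T_linear) by assumption. split; [apply D_scal; assumption | reflexivity].
Qed.

(* Project [(r, 0)] on the graph of [T]: the residual [(r - a, -b)] is orthogonal to the graph,
   which says that [r - a] lies in [D'] with [T' (r - a) = b], while closedness puts [(a, b)] in
   the graph. Testing against [b] gives [|r - a|^2 = - |b|^2]. *)
Lemma adjoint_dom_orth_eq0 (r : vec) : l2 r -> (forall g, D' g -> ipr r g = 0) -> r = vzero.
Proof.
  intros Hr Horth.
  destruct (projection graph (r, vzero) graph_subspace) as [s [[a b] [Hs [[Ha Hb] [Hlim Hres]]]]].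
  { split; simpl; auto using l2_zero. }
  simpl in Ha, Hb.
  destruct (choice (fun k f => D f /\ s k = (T f, f))) as [fk Hfk]; [intros k; apply Hs|].
  assert (Hdist : forall k, psqnorm (psub (s k) (a, b)) = sqnorm (vsub (T (fk k)) a) + sqnorm (vsub (fk k) b))
    by (intros k; rewrite (proj2 (Hfk k)); reflexivity).
  assert (Hgraph_lim : forall w c, (forall k, l2 (w k)) -> l2 c ->
            (forall k, sqnorm (vsub (w k) c) <= psqnorm (psub (s k) (a, b))) ->
            is_lim_seq (fun k => l2norm (vsub (w k) c)) 0).
  { intros w c Hw Hc Hle. apply l2norm_lim_sqnorm; auto.
    apply (is_lim_seq_le_le (fun _ => 0) _ (fun k => psqnorm (psub (s k) (a, b))));
      [|apply is_lim_seq_const | exact Hlim].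
    intros k. split; [apply sqnorm_ge0, l2_sub; auto | apply Hle]. }
  assert (Hclosed : D b /\ T b = a).
  { pose proof (fun k => proj1 (Hfk k)) as HfkD.
    apply (T_closed fk); auto.
    - apply Hgraph_lim; auto. intros k. rewrite Hdist.
      pose proof (sqnorm_ge0 _ (l2_sub _ _ (T_l2 _ (HfkD k)) Ha)). lra.
    - apply Hgraph_lim; auto. intros k. rewrite Hdist.
      pose proof (sqnorm_ge0 _ (l2_sub _ _ (D_l2 _ (HfkD k)) Hb)). lra. }
  destruct Hclosed as [HbD HTb].
  set (p := vsub r a).
  assert (Hp : l2 p) by (apply l2_sub; assumption).
  assert (Hrel : forall f, D f -> ipr (T f) p = ipr f b).
  { intros f Hf. pose proof (Hres (T f, f) (ex_intro _ f (conj Hf eq_refl))) as H0.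
    unfold pipr, psub in H0. simpl in H0.
    rewrite (ipr_subl vzero b f), (ipr_sym vzero), ipr_0r in H0 by auto using l2_zero.
    rewrite ipr_sym, (ipr_sym f). fold p in H0. lra. }
  assert (Hpb : sqnorm p = - sqnorm b).
  { rewrite <- !ipr_self. unfold p at 1. rewrite ipr_subl by assumption.
    rewrite Horth by (apply (adjoint_dom_intro p b); assumption).
    rewrite <- HTb, Hrel by assumption. ring. }
  pose proof (sqnorm_ge0 p Hp). pose proof (sqnorm_ge0 b Hb).
  assert (Eb : b = vzero) by (apply sqnorm_le0; [assumption | lra]).
  assert (Ep : p = vzero) by (apply sqnorm_le0; [assumption | lra]).
  rewrite Eb, (op_zero D T T_linear) in HTb.
  unfold p in Ep. rewrite <- HTb in Ep. apply vsub_eq0 in Ep. exact Ep.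
Qed.

Lemma adjoint_dense : densely_defined D'.
Proof.
  intros x Hx eps Heps.
  set (M := fun p : pvec => exists g, D' g /\ p = (g, vzero)).
  assert (HM : real_subspace M).
  { pose proof adjoint_linear as HL'.
    split; [|split; [|split]].
    - intros p [g [Hg ->]]. split; simpl; auto using adjoint_dom_l2, l2_zero.
    - exists vzero. split; [exact (dom_zero D' T' HL') | reflexivity].
    - intros p q [g1 [H1 ->]] [g2 [H2 ->]]. exists (vadd g1 g2).
      split; [apply (dom_add D' T' HL'); assumption|].
      unfold padd; simpl. f_equal. apply vec_ext. intros n. unfold vadd, vzero. ring.
    - intros t p [g [Hg ->]]. exists (vscal (RtoC t) g).
      split; [apply (dom_scal D' T' HL'); assumption|].
      unfold pscal; simpl. f_equal. apply vec_ext. intros n. unfold vscal, vzero. ring. }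
  destruct (projection M (x, vzero) HM) as [s [[m1 m2] [Hs [[Hm1 Hm2] [Hlim Hres]]]]].
  { split; simpl; auto using l2_zero. }
  simpl in Hm1, Hm2.
  assert (Ex : x = m1).
  { apply vsub_eq0, adjoint_dom_orth_eq0; [apply l2_sub; assumption|].
    intros g Hg. pose proof (Hres (g, vzero) (ex_intro _ g (conj Hg eq_refl))) as H0.
    unfold pipr, psub in H0. simpl in H0. rewrite ipr_0r in H0. lra. }
  subst m1. apply is_lim_seq_spec in Hlim.
  destruct (Hlim (mkposreal (eps ^ 2) (pow2_gt_0 eps ltac:(lra)))) as [K HK].
  specialize (HK K (le_n K)). destruct (Hs K) as [g [Hg Eg]]. rewrite Eg in HK.
  exists g. split; [exact Hg|].
  unfold psqnorm, psub in HK. simpl in HK. rewrite Rminus_0_r in HK.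
  pose proof (sqnorm_ge0 _ (l2_sub _ _ (adjoint_dom_l2 g Hg) Hx)).
  pose proof (sqnorm_ge0 _ (l2_sub _ _ l2_zero Hm2)).
  rewrite l2norm_sqnorm, sqnorm_vsub_sym, <- (sqrt_pow2 eps) by lra.
  apply sqrt_lt_1_alt. apply Rabs_def2 in HK. lra.
Qed.

End Adjoint.

(** * Shift invariance of the adjoint *)

Definition e0 : vec := fun n => match n with O => RtoC 1 | S _ => RtoC 0 end.

Lemma l2_e0 : l2 e0.
Proof.
  apply l2_Cnorm2, ex_series_incr_1, (ex_series_ext (fun _ => 0)); [|exact ex_series_0].
  intros n. unfold e0, Cnorm2; simpl. ring.
Qed.

Lemma ipr_cons (u v : vec) : l2 u -> l2 v ->
  ipr u v = Cdot (u O) (v O) + ipr (shift_adj u) (shift_adj v).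
Proof.
  intros Hu Hv. unfold ipr at 1.
  rewrite Series_incr_1 by (apply ex_series_Cdot; assumption). reflexivity.
Qed.

Lemma ipr_shift_l (f v : vec) : l2 f -> l2 v -> ipr (shift f) v = ipr f (shift_adj v).
Proof.
  intros Hf Hv. rewrite ipr_cons by auto using l2_shift.
  replace (Cdot (shift f O) (v O)) with 0 by (simpl; generalize (v O); intros; unfold_C; ring).
  apply Rplus_0_l.
Qed.

Lemma ipr_shift_r (u g : vec) : l2 u -> l2 g -> ipr u (shift g) = ipr (shift_adj u) g.
Proof. intros. rewrite ipr_sym, ipr_shift_l, ipr_sym by assumption. reflexivity. Qed.

Lemma ipr_scal_e0 (f : vec) (c : C) : l2 f -> ipr f (vscal c e0) = Cdot (f O) c.
Proof.
  intros Hf. rewrite ipr_cons by auto using l2_scal, l2_e0.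
  replace (shift_adj (vscal c e0)) with vzero
    by (apply vec_ext; intros n; unfold shift_adj, vscal, e0, vzero; ring).
  rewrite ipr_0r. unfold vscal, e0. generalize (f O) c. intros. unfold_C. ring.
Qed.

Lemma shift_shift_adj (f : vec) : f O = RtoC 0 -> shift (shift_adj f) = f.
Proof. intros H0. apply vec_ext. intros [|n]; [symmetry; exact H0 | reflexivity]. Qed.

Lemma shift_adj_shift_add_e0 (f : vec) (c : C) : shift_adj (vadd (shift f) (vscal c e0)) = f.
Proof. apply vec_ext. intros n. unfold shift_adj, vadd, vscal, e0, shift. ring. Qed.

Lemma dense_nonvanishing_at0 (D : vec -> Prop) : (forall f, D f -> l2 f) -> densely_defined D ->
  exists k, D k /\ k O <> RtoC 0.
Proof.
  intros Dl Dd. destruct (Dd e0 l2_e0 (1/2)) as [k [Hk Hn]]; [lra|].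
  exists k. split; [exact Hk|]. intros E.
  rewrite l2norm_sqnorm in Hn.
  assert (Hsq : sqnorm (vsub e0 k) < 1/4).
  { apply sqrt_lt_0_alt. replace (sqrt (1/4)) with (1/2); [exact Hn|].
    replace (1/4) with ((1/2) ^ 2) by field. rewrite sqrt_pow2; lra. }
  pose proof (term_le_Series _ O (fun n => Cnorm2_ge0 (vsub e0 k n))
                (proj1 (l2_Cnorm2 _) (l2_sub _ _ l2_e0 (Dl k Hk)))) as H0.
  change (Cnorm2 (Cminus (RtoC 1) (k O)) <= sqnorm (vsub e0 k)) in H0.
  rewrite E in H0. unfold Cnorm2 in H0; simpl in H0. lra.
Qed.

Section Toeplitz.

Variables (D : vec -> Prop) (T : vec -> vec) (D' : vec -> Prop) (T' : vec -> vec).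
Hypothesis T_linear : linear_op D T.
Hypothesis D_dense : densely_defined D.
Hypothesis T_adjoint : is_adjoint D T D' T'.
Hypothesis D_shift : forall f, D f -> D (shift f).
Hypothesis T_toeplitz : forall f, D f -> shift_adj (T (shift f)) = T f.
Hypothesis D_shift_adj : forall f, D f -> f O = RtoC 0 -> D (shift_adj f).

Let D_l2 := dom_l2 D T T_linear.
Let T_l2 := op_l2 D T T_linear.
Let D'_l2 := adjoint_dom_l2 D T D' T' T_adjoint.
Let T'_l2 := adjoint_op_l2 D T D' T' T_adjoint.
Let D_scal := dom_scal D T T_linear.
Let D_sub := dom_sub D T T_linear.

(* The defect [phi f = <T f, z g> - <f, z T' g>] vanishes on [z D] by [S^* T S = T]; by the
   axiom on [S^*], [z D] has codimension at most one in [D], so [phi] is represented by a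
   multiple of [e0]. *)
Lemma adjoint_shift (g : vec) : D' g ->
  exists c, D' (shift g) /\ T' (shift g) = vadd (shift (T' g)) (vscal c e0).
Proof.
  intros Hg. destruct (dense_nonvanishing_at0 D D_l2 D_dense) as [k [Hk Hk0]].
  set (ik := vscal Ci k). assert (Hik : D ik) by (apply D_scal, Hk).
  set (phi := fun f => ipr (T f) (shift g) - ipr f (shift (T' g))).
  assert (phi_shift : forall w, D w -> phi (shift w) = 0).
  { intros w Hw. unfold phi.
    rewrite ipr_shift_r, T_toeplitz, ipr_shift_l, (adjoint_ipr D T D' T') by auto using l2_shift.
    apply Rminus_diag_eq. reflexivity. }
  set (c := Cconj (Cdiv (phi k, - phi ik) (k O))).
  exists c.
  assert (Hrel : forall f, D f -> ipr (T f) (shift g) = ipr f (vadd (shift (T' g)) (vscal c e0))).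
  { intros f Hf.
    set (q := Cdiv (f O) (k O)).
    set (v := vsub (vsub f (vscal (RtoC (Re q)) k)) (vscal (RtoC (Im q)) ik)).
    assert (Hv : D v) by (unfold v; repeat apply D_sub; auto using D_scal).
    assert (Hv0 : v O = RtoC 0).
    { unfold v, ik, vsub, vscal. replace (f O) with (Cmult q (k O)) by (unfold q; field; exact Hk0).
      generalize q (k O). intros. unfold_C. f_equal; ring. }
    assert (Hphiv : phi v = phi f - Re q * phi k - Im q * phi ik).
    { unfold phi, v.
      rewrite !(op_sub D T T_linear), !(op_scal D T T_linear) by auto using D_sub, D_scal.
      rewrite !ipr_subl, !ipr_scalRl by auto using l2_sub, l2_scal, l2_shift. ring. }
    assert (Hc : Cdot (f O) c = Re q * phi k + Im q * phi ik).
    { unfold c, Cdot. rewrite Cconj_conj.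
      replace (Cmult (f O) (Cdiv (phi k, - phi ik) (k O))) with (Cmult q (phi k, - phi ik))
        by (unfold q; field; exact Hk0).
      generalize q. intros. unfold_C. ring. }
    rewrite ipr_addr, ipr_scal_e0, Hc by auto using l2_shift, l2_scal, l2_e0.
    assert (Hphiv0 : phi v = 0).
    { rewrite <- (shift_shift_adj v Hv0). apply phi_shift, D_shift_adj; assumption. }
    assert (Hphif : phi f = Re q * phi k + Im q * phi ik) by lra.
    unfold phi at 1 in Hphif. lra. }
  assert (Hsg : D' (shift g)).
  { apply (adjoint_dom_intro D T D' T' T_linear T_adjoint _ _ (l2_shift _ (D'_l2 g Hg))) with (2 := Hrel).
    apply l2_add; [apply l2_shift, T'_l2, Hg | apply l2_scal, l2_e0]. }
  split; [exact Hsg|].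
  apply (adjoint_op_eq D T D' T'); auto using l2_add, l2_shift, l2_scal, l2_e0, T'_l2.
Qed.

(* With [g 0 = 0]: [<T f, S^* g> = <S^* T S f, S^* g> = <T S f, g> = <S f, T' g> = <f, S^* T' g>]. *)
Lemma adjoint_shift_adj (g : vec) : D' g -> g O = RtoC 0 -> D' (shift_adj g).
Proof.
  intros Hg Hg0. apply (adjoint_dom_intro D T D' T' T_linear T_adjoint _ (shift_adj (T' g)));
    auto using l2_shift_adj.
  intros f Hf. rewrite <- (T_toeplitz f Hf).
  rewrite <- (ipr_shift_l f (T' g)), <- (adjoint_ipr D T D' T' T_adjoint (shift f) g),
    (ipr_cons (T (shift f)) g), Hg0 by auto using l2_shift.
  replace (Cdot (T (shift f) O) (RtoC 0)) with 0 by (generalize (T (shift f) O); intros; unfold_C; ring).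
  ring.
Qed.

End Toeplitz.

Theorem proposition1 (D : vec -> Prop) (T : vec -> vec)
    (D' : vec -> Prop) (T' : vec -> vec) :
  sarason_toeplitz D T -> is_adjoint D T D' T' -> sarason_toeplitz D' T'.
Proof.
  intros (T_linear & T_closed & D_dense & D_shift & T_toeplitz & D_shift_adj) T_adjoint.
  pose proof (adjoint_shift D T D' T' T_linear D_dense T_adjoint D_shift T_toeplitz D_shift_adj)
    as T'_shift.
  split; [exact (adjoint_linear D T D' T' T_linear D_dense T_adjoint)|].
  split; [exact (adjoint_closed D T D' T' T_linear D_dense T_adjoint)|].
  split; [exact (adjoint_dense D T D' T' T_linear D_dense T_adjoint T_closed)|].
  split; [|split].
  - intros g Hg. destruct (T'_shift g Hg) as [c [Hsg _]]. exact Hsg.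
  - intros g Hg. destruct (T'_shift g Hg) as [c [_ ->]]. apply shift_adj_shift_add_e0.
  - exact (adjoint_shift_adj D T D' T' T_linear T_adjoint D_shift T_toeplitz).
Qed.
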